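(* Consider the 9-puzzle: the $3\times 3$ grid graph with 9 distinct robots, one occupying each vertex. Then any two states of the 9-puzzle are connected via legal moves, i.e., from any assignment of the 9 robots to the 9 vertices one can reach any other such assignment by a finite sequence of legal moves.
   Context: A state is a bijection between the set of robots and the vertex set of the grid. A legal move (one time step) takes a state to another state such that each robot either stays at its vertex or moves to an adjacent vertex, no two robots end at the same vertex, and no two robots traverse the same edge in opposite directions (swap). Several robots may move simultaneously; since every vertex is occupied, the moving robots move synchronously along one or more vertex-disjoint cycles of the grid. *)

From mathcomp Require Import all_boot.
From Stdlib Require Import Relations.
Set Implicit Arguments. Unset Strict Implicit. Unset Printing Implicit Defensive.

Definition vertex := ('I_3 * 'I_3)%type.

Definition adjacent (u v : vertex) : bool :=
  ((u.1 == v.1) && ((u.2.+1 == v.2 :> nat) || (v.2.+1 == u.2 :> nat)))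
  || ((u.2 == v.2) && ((u.1.+1 == v.1 :> nat) || (v.1.+1 == u.1 :> nat))).

Definition robot := 'I_9.

Definition is_state (s : robot -> vertex) : Prop := bijective s.

Definition legal_move (s t : robot -> vertex) : Prop :=
  is_state s /\ is_state t /\
  (forall r : robot, t r = s r \/ adjacent (s r) (t r)) /\
  (forall r1 r2 : robot, r1 <> r2 -> ~ (t r1 = s r2 /\ t r2 = s r1)).

Definition reachable : relation (robot -> vertex) := clos_refl_trans (robot -> vertex) legal_move.

From mathcomp Require Import all_boot all_fingroup.
From Stdlib Require Import Relations FunctionalExtensionality.
Set Implicit Arguments. Unset Strict Implicit. Unset Printing Implicit Defensive.
Local Open Scope group_scope.

(* Call a map [f] on vertices realizable if every state [s] can be driven to
   [f \o s], i.e. every robot ends up at the image of its current vertex.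
   Realizable permutations are closed under products.  Rotating the robots
   along a simple cycle of the grid is a single legal move; three such
   rotations compose to the transposition of the centre with a corner.
   Conjugating by the rotation of the border, which fixes the centre, gives
   every transposition with the centre, and these generate all
   permutations of the vertices.  Finally [t = g \o s] for the permutation
   [g = t \o s^-1]. *)

Definition realizable (f : vertex -> vertex) : Prop :=
  forall s, is_state s -> reachable s (f \o s).

Lemma reachable_state s t : reachable s t -> is_state s -> is_state t.
Proof. by elim=> [x y [_ []]|//|x y z _ IHxy _ IHyz] // /IHxy. Qed.

Lemma realizable_comp f g : realizable f -> realizable g -> realizable (g \o f).
Proof.
move=> Rf Rg s s_state; apply: rt_trans (Rf s s_state) _.
exact: Rg (reachable_state (Rf s s_state) s_state).
Qed.

Lemma eq_realizable f g : f =1 g -> realizable f -> realizable g.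
Proof.
move=> eq_fg Rf s s_state.
have -> : g \o s = f \o s by apply: functional_extensionality => r /=.
exact: Rf.
Qed.

Lemma realizable1 : realizable (1 : {perm vertex}).
Proof.
by apply: eq_realizable (fun s _ => rt_refl _ _ s) => v; rewrite perm1.
Qed.

Lemma realizableM (g h : {perm vertex}) :
  realizable g -> realizable h -> realizable (g * h).
Proof.
by move=> Rg Rh; apply: eq_realizable (realizable_comp Rg Rh) => v; rewrite permM.
Qed.

Lemma realizableJ (g h : {perm vertex}) :
  realizable g -> realizable g^-1 -> realizable h -> realizable (h ^ g).
Proof. by move=> Rg RgV Rh; rewrite conjgE; exact: realizableM RgV (realizableM Rh Rg). Qed.

Notation "<< i , j >>" := ((@Ordinal 3 i isT, @Ordinal 3 j isT) : vertex)
  (format "<< i ,  j >>").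

Definition grid : seq vertex :=
  [:: <<0, 0>>; <<0, 1>>; <<0, 2>>; <<1, 0>>; <<1, 1>>; <<1, 2>>;
      <<2, 0>>; <<2, 1>>; <<2, 2>>].

Lemma mem_grid v : v \in grid.
Proof. by case: v => [[[|[|[|?]]] ?] [[|[|[|?]]] ?]]. Qed.

Lemma all_gridP (p : pred vertex) : reflect (forall v, p v) (all p grid).
Proof.
by apply: (iffP allP) => [p_all v | p_all v _]; [apply: p_all (mem_grid v) | apply: p_all].
Qed.

(* Quantifying over the explicit list [grid] rather than with [[forall v, _]]
   keeps these tests evaluable by [vm_compute]. *)
Definition legal_map (f : vertex -> vertex) : bool :=
  [&& all (fun v => (f v == v) || adjacent v (f v)) grid,
      all (fun u => all (fun v => (f u == f v) ==> (u == v)) grid) grid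
    & all (fun u => all (fun v => (f u == v) && (f v == u) ==> (u == v)) grid) grid].

Lemma legal_map_move f s : legal_map f -> is_state s -> legal_move s (f \o s).
Proof.
case/and3P=> /all_gridP f_step /all_gridP f_inj /all_gridP f_noswap s_state.
have inj_f : injective f.
  by move=> u v eq_f; apply/eqP; move/all_gridP/(_ v): (f_inj u); rewrite eq_f eqxx.
have inj_s := bij_inj s_state.
do !split => //.
- exact: bij_comp (injF_bij inj_f) s_state.
- by move=> r; case/orP: (f_step (s r)) => [/eqP|]; [left|right].
move=> r1 r2 ne_r [/= f_r1 f_r2]; apply: ne_r; apply: inj_s; apply/eqP.
by move/all_gridP/(_ (s r2)): (f_noswap (s r1)); rewrite /= f_r1 f_r2 !eqxx.
Qed.

Lemma legal_map_realizable f : legal_map f -> realizable f.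
Proof. by move=> f_legal s s_state; apply/rt_step/legal_map_move. Qed.

Definition center : vertex := <<1, 1>>.

Definition border : seq vertex :=
  [:: <<0, 0>>; <<0, 1>>; <<0, 2>>; <<1, 2>>; <<2, 2>>; <<2, 1>>; <<2, 0>>; <<1, 0>>].

Lemma border_uniq : uniq border. Proof. by []. Qed.

Definition turn : {perm vertex} := perm (can_inj (prev_next border_uniq)).

Lemma turnE : turn =1 next border. Proof. exact: permE. Qed.

Lemma turn_center : turn center = center. Proof. by rewrite turnE. Qed.

Lemma realizable_turn : realizable turn.
Proof.
apply: eq_realizable (legal_map_realizable _) => [v | ]; first by rewrite turnE.
by vm_compute.
Qed.

Lemma realizable_turnV : realizable turn^-1.
Proof.
apply: (@eq_realizable (next (rev border))) => [v | ].
  by rewrite next_rev ?border_uniq // -{1}(permKV turn v) turnE prev_next.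
by apply: legal_map_realizable; vm_compute.
Qed.

Lemma realizable_tperm_center_corner : realizable (tperm center <<0, 0>>).
Proof.
pose lower_left := [:: <<1, 0>>; <<2, 0>>; <<2, 1>>; <<1, 1>>].
pose right_half := [:: <<0, 1>>; <<1, 1>>; <<2, 1>>; <<2, 2>>; <<1, 2>>; <<0, 2>>].
have word : all (fun v => next right_half (next border (next lower_left v))
                   == [fun z => z with center |-> <<0, 0>>, <<0, 0>> |-> center] v) grid.
  by vm_compute.
apply: eq_realizable (realizable_comp (realizable_comp
         (legal_map_realizable (f := next lower_left) _)
         (legal_map_realizable (f := next border) _))
         (legal_map_realizable (f := next right_half) _)) => [v | | |].
- by rewrite /tperm permE; apply/eqP/(all_gridP _ word).
all: by vm_compute.
Qed.

Lemma realizable_tperm_center v : realizable (tperm center v).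
Proof.
have [-> | ne_v] := eqVneq v center; first by rewrite tperm1; apply: realizable1.
have center_or_border : all (fun v => (v == center)
                           || (v \in traject (next border) <<0, 0>> 8)) grid.
  by vm_compute.
move/all_gridP/(_ v): center_or_border; rewrite (negbTE ne_v).
case/trajectP=> i _ ->; elim: i => [|i IHi]; first exact: realizable_tperm_center_corner.
rewrite iterS -turnE -{1}turn_center -tpermJ.
exact: realizableJ realizable_turn realizable_turnV IHi.
Qed.

Lemma realizable_tperm x y : realizable (tperm x y).
Proof.
have [-> | ne_x] := eqVneq x center; first exact: realizable_tperm_center.
have [-> | ne_y] := eqVneq y center; first by rewrite tpermC; apply: realizable_tperm_center.
have [-> | ne_xy] := eqVneq x y; first by rewrite tperm1; apply: realizable1.
have <- : tperm center y ^ tperm center x = tperm x y.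
  by rewrite tpermJ_tperm // eq_sym.
by apply: realizableJ; rewrite ?tpermV; apply: realizable_tperm_center.
Qed.

Lemma realizable_perm (g : {perm vertex}) : realizable g.
Proof.
have [ts -> _] := prod_tpermP g.
apply: (big_ind (fun h : {perm vertex} => realizable h)) => [||t _].
- exact: realizable1.
- exact: realizableM.
- exact: realizable_tperm.
Qed.

Theorem proposition3 (s t : robot -> vertex) :
  is_state s -> is_state t -> reachable s t.
Proof.
move=> s_state t_state; have [s_inv s_invK s_K] := s_state.
have g_inj : injective (t \o s_inv).
  move=> u v /(bij_inj t_state) eq_uv.
  by rewrite -(s_K u) -(s_K v) eq_uv.
have -> : t = perm g_inj \o s.
  by apply: functional_extensionality => r; rewrite /= permE /= s_invK.
exact: realizable_perm.
Qed.
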